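(* Fix $b\in\mathbb{Z}^{V_+}_{\ge 0}$. For every $\bar x\in\mathcal{X}$ define $$\mathrm{SRI}(\bar x)=\Big\{y\in[\mathbf 0,b]^N:\ y^\xi(S)\ge k_\xi(S)+\bar x(E(S))-|S|\ \ \forall\,\emptyset\ne S\subseteq V_+,\ \forall \xi\in[N]\Big\}.$$ Then $\mathrm{SRI}(\bar x)=\operatorname{conv}\big(\Pi(\bar x)\cap[\mathbf 0,b]^N\big)$ for every $\bar x\in\mathcal{X}\cap\mathbb{Z}^E$.
   Context: $G=(V,E)$ is a complete undirected graph with $V=\{0\}\cup V_+$ ($0$ is the depot, $V_+$ the customers); $D=(V,A)$ replaces each edge by two opposite arcs. $C\in\mathbb{Q}_{>0}$ is the capacity. Scenarios $\xi\in[N]$ have demand vectors $d^\xi\in\mathbb{Q}^{V_+}_{\ge0}$ and probabilities $p_\xi\ge0$, $\sum_\xi p_\xi=1$; assume $d^\xi(v)\le C$ for all $\xi,v$. $f(S)=\sum_{i\in S}f(i)$; $k_\xi(S)=\lceil d^\xi(S)/C\rceil$; $\bar d=\sum_\xi p_\xi d^\xi$. For $S\subseteq V$, $\delta(S)$ is the set of edges with exactly one endpoint in $S$ and $E(S)$ the set of edges with both endpoints in $S$. $\mathcal{X}$ is one of the polytopes $\mathcal{X}_{\mathrm{sub}}=\{x\in[0,2]^E: x(\delta(v))=2\ \forall v\in V_+,\ x(E(S))\le|S|-1\ \forall\emptyset\ne S\subseteq V_+\}$ or $\mathcal{X}_{\mathrm{cvrp}}=\mathcal{X}_{\mathrm{sub}}\cap\{x: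 x(\delta(0))=2k,\ x(E(S))\le |S|-\lceil \bar d(S)/C\rceil\ \forall \emptyset\ne S\subseteq V_+\}$ for a given positive integer $k$. A route $R=(v_1,\dots,v_\ell)$ is the cycle $0,v_1,\dots,v_\ell,0$ through distinct customers, $V_+(R)=\{v_1,\dots,v_\ell\}$, $v_0=v_{\ell+1}=0$. Each $x\in\mathcal{X}\cap\mathbb{Z}^E$ is a routing plan; $\mathcal{R}(x)$ is the collection of routes it encodes (a value $2$ on edge $\{0,v\}$ encodes the route $(v)$), whose customer sets partition $V_+$. Vectors $y\in\mathbb{R}^{[N]\times V_+}$ have entries $y^\xi_v$, $y^\xi$ is the scenario-$\xi$ restriction. For a route $R=(v_1,\dots,v_\ell)$ and $\xi$, $\mathcal{Y}^\xi(R)$ is the set of $y^\xi\in\mathbb{Z}^{V_+}_{\ge0}$ for which there exist $f\in\mathbb{R}^A_{\ge0}$, $g\in\mathbb{R}^{V_+}_{\ge0}$ with $f_{(v_{i-1},v_i)}+d^\xi(v_i)=f_{(v_i,v_{i+1})}+g_{v_i}$ ($i\in[\ell]$), $f_{(v_{i-1},v_i)}\le C$ ($i\in[\ell+1]$), $g_{v_i}\le C y^\xi_{v_i}$ ($i\in[\ell]$). $\Pi(R)=\mathcal{Y}^1(R)\times\cdots\times\mathcal{Y}^N(R)$, and $\Pi(x)=\bigcap_{R\in\mathcal{R}(x)}\Pi(R)$ for $x\in\mathcal{X}\cap\mathbb{Z}^E$. $[\mathbf 0,b]^N=\{y\in\mathbb{R}^{[N]\times V_+}:0\le y^\xi_v\le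 b_v\ \forall\xi,v\}$. *)

From HB Require Import structures.
From mathcomp Require Import all_boot all_order all_algebra.
From mathcomp Require Import reals.
Set Implicit Arguments. Unset Strict Implicit. Unset Printing Implicit Defensive.
Import Order.TTheory GRing.Theory Num.Theory.
Local Open Scope ring_scope.

(* Customers are 'I_n; vertices are option 'I_n with None = depot 0 and
   Some v = customer v.
   Edges of the complete graph G are the 2-element subsets of vertices;
   an edge vector x is a function {set option 'I_n} -> R (only its values on
   edges matter). *)

Section Defs.
Variables (R : realType) (n N : nat).

Definition vertex := option 'I_n.
Definition is_edge (e : {set vertex}) : bool := #|e| == 2%N.

Definition x_delta_cust (x : {set vertex} -> R) (v : 'I_n) : R :=
  \sum_(e : {set vertex} | is_edge e && (Some v \in e)) x e.
Definition x_delta_depot (x : {set vertex} -> R) : R :=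
  \sum_(e : {set vertex} | is_edge e && (None \in e)) x e.
Definition x_E (x : {set vertex} -> R) (S : {set 'I_n}) : R :=
  \sum_(e : {set vertex} | is_edge e && (e \subset (@Some _) @: S)) x e.

Definition in_X_sub (x : {set vertex} -> R) : Prop :=
  [/\ forall e, is_edge e -> 0 <= x e <= 2,
      forall v : 'I_n, x_delta_cust x v = 2 &
      forall S : {set 'I_n}, S != set0 -> x_E x S <= (#|S|%:R - 1)].

Definition ceilR (q : rat) : R := (Num.ceil q)%:~R.

Definition kS (C : rat) (d : 'I_N -> 'I_n -> rat) (xi : 'I_N) (S : {set 'I_n}) : R :=
  ceilR ((\sum_(v in S) d xi v) / C).

Definition dbar (p : 'I_N -> rat) (d : 'I_N -> 'I_n -> rat) (v : 'I_n) : rat :=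
  \sum_(xi < N) p xi * d xi v.

Definition in_X_cvrp (C : rat) (d : 'I_N -> 'I_n -> rat) (p : 'I_N -> rat) (k : nat)
  (x : {set vertex} -> R) : Prop :=
  [/\ in_X_sub x,
      x_delta_depot x = 2 * k%:R &
      forall S : {set 'I_n}, S != set0 ->
        x_E x S <= #|S|%:R - ceilR ((\sum_(v in S) dbar p d v) / C)].

Inductive Xchoice := Xsub | Xcvrp of nat.

Definition in_X (C : rat) (d : 'I_N -> 'I_n -> rat) (p : 'I_N -> rat) (ch : Xchoice)
  (x : {set vertex} -> R) : Prop :=
  match ch with
  | Xsub => in_X_sub x
  | Xcvrp k => in_X_cvrp C d p k x
  end.

Definition is_intR (r : R) : Prop := exists z : int, r = z%:~R.

Definition integral_on_edges (x : {set vertex} -> R) : Prop :=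
  forall e, is_edge e -> is_intR (x e).

(* A route (v_1,...,v_l) is a sequence of customers; v_0 = v_{l+1} = depot *)
Definition route := seq 'I_n.

Definition rv (r : route) (i : nat) : vertex :=
  nth None (None :: map (@Some _) r) i.

Definition route_edge_count (r : route) (e : {set vertex}) : nat :=
  \sum_(i < (size r).+1) ([set rv r i; rv r i.+1] == e : nat).

Definition encodes (x : {set vertex} -> R) (Rs : seq route) : Prop :=
  [/\ all (fun r => (0 < size r)%N) Rs,
      uniq (flatten Rs),
      forall v : 'I_n, v \in flatten Rs &
      forall e, is_edge e -> x e = (\sum_(r <- Rs) route_edge_count r e)%:R].

Definition in_Y (C : rat) (d : 'I_N -> 'I_n -> rat) (xi : 'I_N) (r : route)
  (yxi : 'I_n -> R) : Prop :=
  (forall v, is_intR (yxi v) /\ 0 <= yxi v) /\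
  exists (f : vertex -> vertex -> R) (g : 'I_n -> R),
    [/\ forall u w, 0 <= f u w,
        forall v, 0 <= g v,
        forall i, (1 <= i <= size r)%N -> forall v, rv r i = Some v ->
           f (rv r i.-1) (rv r i) + ratr (d xi v) = f (rv r i) (rv r i.+1) + g v,
        forall i, (1 <= i <= (size r).+1)%N -> f (rv r i.-1) (rv r i) <= ratr C &
        forall i, (1 <= i <= size r)%N -> forall v, rv r i = Some v ->
           g v <= ratr C * yxi v].

Definition in_Pi_route C d (r : route) (y : 'I_N -> 'I_n -> R) : Prop :=
  forall xi, in_Y C d xi r (y xi).

Definition in_Pi C d (x : {set vertex} -> R) (y : 'I_N -> 'I_n -> R) : Prop :=
  forall Rs, encodes x Rs -> forall r, r \in Rs -> in_Pi_route C d r y.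

Definition in_box (b : 'I_n -> nat) (y : 'I_N -> 'I_n -> R) : Prop :=
  forall xi v, 0 <= y xi v <= (b v)%:R.

Definition in_SRI C d (b : 'I_n -> nat) (x : {set vertex} -> R)
  (y : 'I_N -> 'I_n -> R) : Prop :=
  in_box b y /\
  forall (S : {set 'I_n}) (xi : 'I_N), S != set0 ->
    \sum_(v in S) y xi v >= kS C d xi S + x_E x S - #|S|%:R.

Definition conv (P : ('I_N -> 'I_n -> R) -> Prop) (y : 'I_N -> 'I_n -> R) : Prop :=
  exists (m : nat) (lam : 'I_m -> R) (pts : 'I_m -> 'I_N -> 'I_n -> R),
    [/\ forall j, 0 <= lam j /\ P (pts j),
        \sum_(j < m) lam j = 1 &
        forall xi v, y xi v = \sum_(j < m) lam j * pts j xi v].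

End Defs.

From HB Require Import structures.
From mathcomp Require Import all_boot all_order all_algebra.
From mathcomp Require Import reals.
From mathcomp Require Import zify ring lra.
Import Order.TTheory GRing.Theory Num.Theory.
Set Implicit Arguments. Unset Strict Implicit. Unset Printing Implicit Defensive.

(* An integral point of X is a union of routes: cutting a customer edge uw into
   two depot edges preserves the degree and subtour constraints, and the routes
   of the smaller plan ending at u and at w are distinct (else the route through
   u, together with uw, violates a subtour constraint) and glue back together.

   On a route, a nonnegative integral y lies in Y^xi iff every block T of
   consecutive customers satisfies d(T) <= C (1 + y(T)): the greedy flow that
   unloads up to C y(v) at every customer then never exceeds C. Cutting any S
   into maximal runs along the routes and adding the block bounds gives
   d(S) <= C (y(S) + |S| - x(E(S))), which is the SRI because the last factor is
   an integer; conversely the SRI for the customers of a block T, for which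
   x(E(T)) >= |T| - 1, gives y(T) >= k(T) - 1 and hence the block bound. So
   Pi(x) consists of the nonnegative integral points satisfying the SRI.

   Finally SRI(x) is an integral polytope: concatenate the routes, let P_i be
   the prefix sums of y^xi and put z_t(v_i) = floor(P_i + t) - floor(P_(i-1) + t).
   Block sums of z_t are floor differences of prefix sums, so z_t keeps every
   integral bound on block sums of y (the box and the block bounds), and
   averaging t over the fractional breakpoints of all P_i recovers y. *)

Section AdjacentPairs.
Variable T : eqType.
Implicit Types (e : rel T) (s p q : seq T).

Fixpoint count_adj e s : nat :=
  if s is a :: s' then (if s' is b :: _ then e a b + count_adj e s' else 0) else 0.

Lemma count_adj_cons2 e a b s :
  count_adj e [:: a, b & s] = e a b + count_adj e (b :: s).
Proof. by []. Qed.

Lemma count_adj_nth e x0 a q : count_adj e (a :: q) =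
  \sum_(i < size q) e (nth x0 (a :: q) i) (nth x0 (a :: q) i.+1).
Proof.
elim: q a => [|b q IH] a; first by rewrite big_ord0.
by rewrite count_adj_cons2 big_ord_recl IH.
Qed.

Lemma count_adj_cat e a p b q : count_adj e ((a :: p) ++ (b :: q)) =
  count_adj e (a :: p) + e (last a p) b + count_adj e (b :: q).
Proof.
elim: p a => [|c p IH] a /=; first by rewrite add0n.
by move: IH; rewrite /= => ->; rewrite !addnA.
Qed.

Lemma count_adj_rcons e a p b :
  count_adj e (rcons (a :: p) b) = count_adj e (a :: p) + e (last a p) b.
Proof. by rewrite -cats1 count_adj_cat addn0. Qed.

Lemma count_adj_rev e : symmetric e -> forall s, count_adj e (rev s) = count_adj e s.
Proof.
move=> eC; elim=> [|a [|b s] IH] //.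
have [c [p Ebs]] : exists c p, rev (b :: s) = c :: p.
  by case E: (rev (b :: s)) => [|c p]; [move/(f_equal size): E; rewrite size_rev | exists c, p].
have Lb : last c p = b by move: (f_equal (last a) Ebs); rewrite rev_cons last_rcons.
by rewrite rev_cons Ebs count_adj_rcons -Ebs IH Lb count_adj_cons2 eC addnC.
Qed.

Lemma leq_count_adj_cat e p q : count_adj e p + count_adj e q <= count_adj e (p ++ q).
Proof.
elim: p => [|a p IH] //; case: p IH => [|b p] IH /=.
  by case: q {IH} => [|c q] //=; rewrite leq_addl.
by rewrite -addnA leq_add2l.
Qed.

Lemma count_adj_all e s : {in s &, forall a b, e a b} -> count_adj e s = (size s).-1.
Proof.
elim: s => [|a [|b s] IH] // eS.
rewrite count_adj_cons2 eS ?inE ?eqxx ?orbT // IH // => u v uS vS.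
by apply: eS; rewrite inE ?uS ?vS orbT.
Qed.

Lemma count_adj_consF e a s : (forall b, e a b = false) -> count_adj e (a :: s) = count_adj e s.
Proof. by case: s => [|b s] //= ->. Qed.

Lemma sum_count_adj (I : finType) (f : T -> T -> I) (Q : pred I) s :
  \sum_(c | Q c) count_adj (fun a b => f a b == c) s = count_adj (fun a b => Q (f a b)) s.
Proof.
elim: s => [|a [|b s] IH]; [by rewrite big1 | by rewrite big1 |].
under eq_bigr do rewrite count_adj_cons2.
rewrite big_split IH count_adj_cons2; congr (_ + _).
rewrite big_mkcond (bigD1 (f a b)) //= big1 => [|c /negbTE]; first by rewrite eqxx addn0; case: (Q _).
by rewrite eq_sym => ->; case: (Q c).
Qed.

End AdjacentPairs.

Section Sequences.
Variable T : eqType.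

Lemma uniq_flatten_mem (ss : seq (seq T)) s : s \in ss -> uniq (flatten ss) -> uniq s.
Proof.
elim: ss => [|s' ss IH] //=; rewrite inE cat_uniq => /orP[/eqP->|sin] /and3P[u1 _ u2] //.
exact: IH.
Qed.

Lemma flatten_uniq_mem_eq (ss : seq (seq T)) s1 s2 x : uniq (flatten ss) ->
  s1 \in ss -> s2 \in ss -> x \in s1 -> x \in s2 -> s1 = s2.
Proof.
elim: ss => [|s ss IH] //=; rewrite cat_uniq => /and3P[_ H u2].
have NH s' : s' \in ss -> x \in s' -> x \in s -> False.
  by move=> s'in xs' xs; move/hasP: H; apply; exists x => //; apply/flattenP; exists s'.
rewrite !inE => /orP[/eqP->|i1] /orP[/eqP->|i2] x1 x2 //.
- by case: (NH s2).
- by case: (NH s1).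
- exact: IH.
Qed.

Lemma uniq_flatten_nonempty (ss : seq (seq T)) :
  all (fun s => 0 < size s) ss -> uniq (flatten ss) -> uniq ss.
Proof.
elim: ss => [|[|a s] ss IH] // /andP[_ aR].
change (uniq ((a :: s) ++ flatten ss) -> uniq ((a :: s) :: ss)).
rewrite cat_uniq => /and3P[_ H u2] /=.
rewrite IH // andbT; apply: contra H => sin; apply/hasP; exists a; last exact: mem_head.
by apply/flattenP; exists (a :: s); rewrite ?mem_head.
Qed.

Lemma flatten_infix (ss : seq (seq T)) s u t w : s \in ss -> s = u ++ t ++ w ->
  exists U W, flatten ss = U ++ t ++ W.
Proof.
move=> /splitPr[A B] E; exists (flatten A ++ u), (w ++ flatten B).
by rewrite flatten_cat /= E !catA.
Qed.

Lemma run_split (P : pred T) a s : P a -> exists t w,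
  [/\ a :: s = t ++ w, t != [::], all P t & (if w is b :: _ then ~~ P b else true)].
Proof.
elim: s a => [|b s IH] a Pa; first by exists [:: a], [::]; rewrite /= Pa.
case Pb: (P b); last by exists [:: a], (b :: s); rewrite /= Pa Pb.
have [t [w [E tn At Hw]]] := IH b Pb.
by exists (a :: t), w; rewrite /= E Pa At.
Qed.

End Sequences.

Section RouteEdges.
Variable n : nat.
Notation V := (vertex n).
Implicit Types (r : route n) (S : {set 'I_n}).

Definition route_path r : seq V := None :: map Some r ++ [:: None].
Definition depot_edge (u : 'I_n) : {set V} := [set None; Some u].
Definition cust_edge (u w : 'I_n) : {set V} := [set Some u; Some w].
Definition inner_adj S r := count_adj (fun a b => (a \in S) && (b \in S)) r.

Lemma rv_route_path r i : rv r i = nth None (route_path r) i.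
Proof.
rewrite /rv /route_path -cat_cons nth_cat /=; case: ifP => // /negbT; rewrite -leqNgt => H.
by rewrite nth_default //; case: (i - _)%N => [|k] //=; rewrite nth_nil.
Qed.

Lemma route_edge_countE r e :
  route_edge_count r e = count_adj (fun a b => [set a; b] == e) (route_path r).
Proof.
rewrite /route_edge_count /route_path (count_adj_nth _ None) size_cat size_map addn1.
by apply: eq_bigr => i _; rewrite -!/(route_path r) -!rv_route_path.
Qed.

Lemma route_path_rev r : route_path (rev r) = rev (route_path r).
Proof. by rewrite /route_path rev_cons rev_cat /= map_rev cats1. Qed.

Lemma count_adj_route_cat (e : rel V) a0 a b0 b :
  count_adj e (route_path ((a0 :: a) ++ (b0 :: b))) + e (Some (last a0 a)) None +
  e None (Some b0) =
  count_adj e (route_path (a0 :: a)) + count_adj e (route_path (b0 :: b)) +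
  e (Some (last a0 a)) (Some b0).
Proof.
have -> : route_path ((a0 :: a) ++ (b0 :: b)) =
  (None :: Some a0 :: map Some a) ++ (Some b0 :: map Some b ++ [:: None]).
  by rewrite /route_path map_cat /= -?catA.
have -> : route_path (a0 :: a) = (None :: Some a0 :: map Some a) ++ [:: None].
  by rewrite /route_path /= -?catA.
have -> : route_path (b0 :: b) = [:: None] ++ (Some b0 :: map Some b ++ [:: None]) by [].
rewrite !count_adj_cat /= last_map !addn0 !add0n; lia.
Qed.

Lemma eq_depot_edge a u : (depot_edge a == depot_edge u) = (a == u).
Proof.
apply/eqP/eqP => [E|->] //.
have : Some a \in depot_edge u by rewrite -E !inE eqxx orbT.
by rewrite !inE /= => /eqP [].
Qed.

Lemma cust_edge_neq_depot_edge a c u : (cust_edge a c == depot_edge u) = false.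
Proof.
apply/negbTE/eqP => E.
have : (None : V) \in cust_edge a c by rewrite E !inE eqxx.
by rewrite !inE.
Qed.

Lemma count_depot_edge u a s :
  count_adj (fun x y => [set x; y] == depot_edge u) (route_path (a :: s)) =
  (a == u) + (last a s == u).
Proof.
rewrite /route_path /= -[[set None; Some a]]/(depot_edge a) eq_depot_edge; congr (_ + _).
elim: s a => [|c s IH] a /=; first by rewrite setUC -/(depot_edge a) eq_depot_edge addn0.
by rewrite -/(cust_edge a c) cust_edge_neq_depot_edge IH.
Qed.

Lemma is_edge_cust_edge a b : is_edge (cust_edge a b) = (a != b).
Proof. by rewrite /is_edge cards2 (inj_eq (@Some_inj _)); case: (a != b). Qed.

Lemma cust_edge_sub a b S : (cust_edge a b \subset Some @: S) = (a \in S) && (b \in S).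
Proof. by rewrite subUset !sub1set !mem_imset //; apply: Some_inj. Qed.

Lemma depot_set2_subF S (x : V) : ([set None; x] \subset Some @: S) = false.
Proof.
rewrite subUset sub1set; apply/negbTE; apply/negP => /andP[H _].
by case/imsetP: H.
Qed.

Lemma depot_edge_is_edge u : is_edge (depot_edge u).
Proof. by rewrite /is_edge cards2. Qed.

Lemma is_edge_depot (e : {set V}) : is_edge e -> None \in e -> exists u, e = depot_edge u.
Proof.
move=> /cards2P [a [b [ab ->]]]; rewrite !inE => /orP[] /eqP Ea; subst.
  by case: b ab => [u|] ab; [exists u | rewrite eqxx in ab].
by case: a ab => [u|] ab; [exists u; rewrite setUC | rewrite eqxx in ab].
Qed.

Lemma is_edge_cust (e : {set V}) : is_edge e -> None \notin e ->
  exists u w, u != w /\ e = cust_edge u w.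
Proof.
move=> /cards2P [a [b [ab ->]]]; rewrite !inE negb_or => /andP[na nb].
case: a ab na => [u|] //; case: b nb => [w|] // _ ab _.
by exists u, w; split => //; apply: contra ab => /eqP ->.
Qed.

Lemma count_inner_edges S r : uniq r ->
  count_adj (fun a b => is_edge [set a; b] && ([set a; b] \subset Some @: S)) (route_path r) =
  inner_adj S r.
Proof.
rewrite /inner_adj; case: r => [|a s] /=; first by rewrite depot_set2_subF andbF.
rewrite depot_set2_subF andbF add0n.
elim: s a => [|c s IH] a /=; first by rewrite setUC depot_set2_subF andbF.
move=> /andP[]; rewrite inE negb_or => /andP[ac _] us.
by rewrite -IH // -/(cust_edge a c) is_edge_cust_edge ac cust_edge_sub.
Qed.

End RouteEdges.

Local Open Scope ring_scope.

Section Encodings.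
Variables (R : realType) (n : nat).
Implicit Types (x : {set vertex n} -> R) (Rs : seq (route n)) (S : {set 'I_n}).

Lemma sum_partition Rs (F : 'I_n -> R) S :
  uniq (flatten Rs) -> (forall v, v \in flatten Rs) ->
  \sum_(v in S) F v = \sum_(r <- Rs) \sum_(v <- r | v \in S) F v.
Proof.
move=> uf cov; rewrite -big_flatten /=; apply: perm_big.
apply: uniq_perm => //; first exact: index_enum_uniq.
by move=> v; rewrite mem_index_enum cov.
Qed.

Lemma card_partition Rs S :
  uniq (flatten Rs) -> (forall v, v \in flatten Rs) ->
  #|S|%:R = \sum_(r <- Rs) (count (mem S) r)%:R :> R.
Proof.
move=> uf cov; rewrite -sumr_const (sum_partition _ _ uf cov); apply: eq_bigr => r _.
by rewrite -sum1_count natr_sum.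
Qed.

Lemma x_E_encodes x Rs S : encodes x Rs -> x_E x S = (\sum_(r <- Rs) inner_adj S r)%:R.
Proof.
case=> _ uf _ Hx; rewrite /x_E.
rewrite (eq_bigr (fun e => (\sum_(r <- Rs) route_edge_count r e)%:R)); last first.
  by move=> e /andP[ie _]; apply: Hx.
rewrite -natr_sum exchange_big /=; congr (_%:R).
rewrite big_seq [RHS]big_seq; apply: eq_bigr => r rin.
under eq_bigr do rewrite route_edge_countE.
rewrite (sum_count_adj (fun a b => [set a; b])) count_inner_edges //.
exact: uniq_flatten_mem uf.
Qed.

Lemma x_E_block x Rs r u t w : encodes x Rs -> r \in Rs ->
  r = u ++ t ++ w -> t != [::] -> (size t)%:R - 1 <= x_E x [set v in t].
Proof.
move=> He rin E tn; rewrite (x_E_encodes _ He).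
have st : (0 < size t)%N by case: t tn {E}.
rewrite -(prednK st) -natr1 addrK ler_nat.
have -> : (size t).-1 = inner_adj [set v in t] t.
  by rewrite /inner_adj count_adj_all // => a b; rewrite !inE => -> ->.
rewrite (perm_big _ (perm_to_rem rin)) big_cons; apply: leq_trans (leq_addr _ _).
rewrite E /inner_adj; apply: leq_trans (leq_count_adj_cat _ _ _); apply: leq_trans (leq_addl _ _).
by apply: leq_trans (leq_count_adj_cat _ _ _); apply: leq_addr.
Qed.

End Encodings.

Section Blocks.
Variables (R : realType) (n : nat).
Implicit Types (C : R) (z dd : 'I_n -> R) (r : route n).

Definition ext0 (F : 'I_n -> R) (o : vertex n) : R := if o is Some v then F v else 0.

Definition block_feasible C z dd r : Prop :=
  forall u t w, r = u ++ t ++ w -> t != [::] ->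
    \sum_(v <- t) dd v <= C * (1 + \sum_(v <- t) z v).

Lemma block_feasible_suffix C z dd p r :
  block_feasible C z dd (p ++ r) -> block_feasible C z dd r.
Proof. by move=> H u t w E tn; apply: (H (p ++ u) t w) => //; rewrite E catA. Qed.

Lemma rvS r k : rv r k.+1 = nth None (map Some r) k.
Proof. by []. Qed.

Lemma sum_block_rv F u t w : \sum_(v <- t) F v =
  \sum_(size u <= k < size u + size t) ext0 F (rv (u ++ t ++ w) k.+1).
Proof.
rewrite -{1}(add0n (size u)) big_addn addKn.
rewrite -(big_map (@Some _) xpredT (ext0 F)) (big_nth None) size_map.
apply: eq_big_nat => k /andP[_ kt].
rewrite rvS !map_cat nth_cat size_map ltnNge leq_addl /= addnK.
by rewrite nth_cat size_map kt.
Qed.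

Lemma block_feasibleP C z dd r : block_feasible C z dd r <->
  (forall j i, (j < i)%N -> (i <= size r)%N ->
    \sum_(j <= k < i) ext0 dd (rv r k.+1) <= C * (1 + \sum_(j <= k < i) ext0 z (rv r k.+1))).
Proof.
split=> [H j i ji ir | H u t w E tn].
  have E : r = take j r ++ drop j (take i r) ++ drop i r.
    by rewrite catA -{1}(take_takel _ (ltnW ji)) cat_take_drop cat_take_drop.
  have su : size (take j r) = j by rewrite size_take; case: ltnP => //; lia.
  have st : size (drop j (take i r)) = (i - j)%N.
    by rewrite size_drop size_take; case: ltnP => //; lia.
  have := H _ _ _ E; rewrite !(sum_block_rv _ (take j r) _ (drop i r)) -E su st.
  have -> : (j + (i - j))%N = i by lia.
  by apply; apply/eqP => t0; move: st; rewrite t0 /=; lia.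
rewrite !(sum_block_rv _ u t w) -E; apply: H.
  by case: t tn {E} => // x t _ /=; lia.
by rewrite E !size_cat; lia.
Qed.

Lemma block_feasible_sum_in C z dd (S : {set 'I_n}) r : block_feasible C z dd r ->
  \sum_(v <- r | v \in S) dd v <=
  C * (\sum_(v <- r | v \in S) z v + (count (mem S) r)%:R - (inner_adj S r)%:R).
Proof.
have [m lt_r_m] := ubnP (size r); elim: m r lt_r_m => // m IH [|a r'] Hs Hblk.
  by rewrite !big_nil /= subr0 addr0 mulr0.
case aS: (a \in S); last first.
  rewrite /inner_adj count_adj_consF => [|b]; last by rewrite aS.
  rewrite !big_cons aS /= aS add0n.
  by apply: IH; [rewrite /= ltnS in Hs | exact: (block_feasible_suffix (p := [:: a]))].
have [t [w [E tn At Hw]]] := run_split (P := fun v => v \in S) r' aS.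
rewrite E in Hblk Hs *.
have IHw : \sum_(v <- w | v \in S) dd v <=
    C * (\sum_(v <- w | v \in S) z v + (count (mem S) w)%:R - (inner_adj S w)%:R).
  apply: IH; last exact: block_feasible_suffix Hblk.
  by rewrite size_cat in Hs; case: t tn {E At Hblk} Hs => // x t _ /=; lia.
have Ht := Hblk [::] t w erefl tn.
rewrite !big_cat /= -!(big_filter t) (all_filterP At) count_cat.
have -> : count (mem S) t = size t by apply/eqP; rewrite -all_count.
have -> : inner_adj S (t ++ w) = ((size t).-1 + inner_adj S w)%N.
  case: t tn At {E Hblk Ht Hs} => // x t _ At.
  rewrite /inner_adj -(count_adj_all (e := fun a b => (a \in S) && (b \in S))); last first.
    by move=> p q /(allP At) pS /(allP At) qS; apply/andP.
  case: w Hw {IHw} => [|y w] Hw; first by rewrite cats0 addn0.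
  by rewrite count_adj_cat (negbTE Hw) andbF addn0.
have st : (0 < size t)%N by case: t tn {E At Hblk Ht Hs}.
rewrite !natrD -(prednK st) -natr1 /=.
move: IHw Ht; set D := \sum_(i <- w | i \in S) dd i; set Z := \sum_(i <- w | i \in S) z i.
move=> H1 H2; apply: le_trans (lerD H2 H1) _.
by rewrite le_eqVlt; apply/orP; left; apply/eqP; ring.
Qed.

End Blocks.

Section Flows.
Variables (R : realType) (n : nat).
Implicit Types (r : route n) (y dd : 'I_n -> R).

Lemma rv_some r k : (k < size r)%N -> exists v, rv r k.+1 = Some v.
Proof.
move=> kr; rewrite rvS.
have : nth None (map Some r) k \in map Some r by apply: mem_nth; rewrite size_map.
by case/mapP => v _ ->; exists v.
Qed.

Lemma rv_index r i v : uniq r -> rv r i.+1 = Some v -> index v r = i /\ v \in r.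
Proof.
move=> ur; rewrite rvS => E.
have ir : (i < size r)%N.
  by rewrite ltnNge; apply/negP => H; move: E; rewrite nth_default // size_map.
have vr : Some v \in map Some r by rewrite -E mem_nth // size_map.
split; last by move: vr; rewrite mem_map //; apply: Some_inj.
rewrite -(index_map (@Some_inj _)) -E index_uniq // ?size_map //.
by rewrite map_inj_uniq //; apply: Some_inj.
Qed.

Lemma block_feasible_of_in_Y N (C : rat) (d : 'I_N -> 'I_n -> rat) xi r y :
  in_Y C d xi r y -> block_feasible (ratr C) y (fun v => ratr (d xi v)) r.
Proof.
case=> _ [f [g [f0 g0 flow cap gle]]].
set dd := fun v => ratr (d xi v) : R.
apply/block_feasibleP => j i ji ir.
pose F k := f (rv r k) (rv r k.+1).
have balance i' : (j <= i')%N -> (i' <= size r)%N ->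
    F j + \sum_(j <= k < i') ext0 dd (rv r k.+1) = F i' + \sum_(j <= k < i') ext0 g (rv r k.+1).
  elim: i' => [|i' IH] H1 H2; first by move: H1; rewrite leqn0 => /eqP ->; rewrite !big_geq.
  case: (ltngtP j i'.+1) H1 => // [ji' _|<- _]; last by rewrite !big_geq.
  rewrite !big_nat_recr //= addrA IH //; last exact: ltnW.
  have [v Ev] := rv_some H2.
  rewrite Ev /= -addrA [_ + dd v]addrC addrA (flow i'.+1) /= ?H2 //.
  by rewrite /F; ring.
have Fj0 : 0 <= F j by apply: f0.
have FiC : F i <= ratr C by apply: (cap i.+1); rewrite /= ltnS ir.
have gy : \sum_(j <= k < i) ext0 g (rv r k.+1) <= ratr C * \sum_(j <= k < i) ext0 y (rv r k.+1).
  rewrite mulr_sumr; apply: ler_sum_nat => k /andP[_ ki].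
  have [v Ev] := rv_some (leq_trans ki ir).
  by rewrite Ev /=; apply: (gle k.+1) => //=; exact: leq_trans ki ir.
have := balance i (ltnW ji) ir; rewrite mulrDr mulr1; lra.
Qed.

(* The greedy flow: each customer unloads as much as its bound [C * y v] allows. *)
Fixpoint carry (C : R) dd y r (k : nat) : R :=
  if k is k'.+1 then Num.max 0 (carry C dd y r k' + ext0 dd (rv r k) - C * ext0 y (rv r k))
  else 0.

Lemma carry_ge0 C dd y r k : 0 <= carry C dd y r k.
Proof. by case: k => //= k; rewrite le_max lexx. Qed.

Lemma carry_window C dd y r k : exists2 j, (j <= k)%N &
  carry C dd y r k = \sum_(j <= m < k) (ext0 dd (rv r m.+1) - C * ext0 y (rv r m.+1)).
Proof.
elim: k => [|k [j jk E]]; first by exists 0%N => //; rewrite big_geq.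
rewrite /=; set X := _ + _ - _.
have [X0|X0] := leP X 0; first by exists k.+1 => //; rewrite big_geq // max_l.
by exists j; [exact: leqW | rewrite big_nat_recr //= /X E addrA].
Qed.

Lemma carry_le C dd y r k : 0 <= C -> block_feasible C y dd r -> (k <= size r)%N ->
  carry C dd y r k <= C.
Proof.
move=> C0 Hs kr; have [j jk ->] := carry_window C dd y r k.
case: (ltngtP j k) jk => // [jk _|-> _]; last by rewrite big_geq.
have := (block_feasibleP C y dd r).1 Hs j k jk kr.
rewrite sumrB -mulr_sumr mulrDr mulr1; lra.
Qed.

Lemma in_Y_of_block_feasible N (C : rat) (d : 'I_N -> 'I_n -> rat) xi r y :
  0 <= C -> (forall v, 0 <= d xi v) -> (forall v, is_intR (y v) /\ 0 <= y v) ->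
  uniq r -> block_feasible (ratr C) y (fun v => ratr (d xi v)) r -> in_Y C d xi r y.
Proof.
move=> C0 d0 Hy ur Hs; split => //.
set dd := fun v => ratr (d xi v) : R.
set Cr := ratr C : R.
have Cr0 : 0 <= Cr by rewrite ler0q.
set L := carry Cr dd y r.
pose f (a b : vertex n) := if b is Some v then L (index v r) else L (size r).
pose g v := if v \in r then L (index v r) + dd v - L (index v r).+1 else 0.
have fE i : (i <= size r)%N -> f (rv r i) (rv r i.+1) = L i.
  move=> ir; rewrite /f; case E: (rv r i.+1) => [v|]; first by case: (rv_index ur E) => ->.
  case: (ltngtP i (size r)) ir => // [ilt _|-> _] //.
  by have [v Ev] := rv_some ilt; rewrite Ev in E.
have Lstep i v : rv r i.+1 = Some v -> L i.+1 = Num.max 0 (L i + dd v - Cr * y v).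
  by move=> E; rewrite /L /= E.
exists f, g; split.
- by move=> a [b|]; apply: carry_ge0.
- move=> v; rewrite /g; case: ifP => // vr.
  have E : rv r (index v r).+1 = Some v by rewrite rvS (nth_map v) ?index_mem // nth_index.
  rewrite (Lstep _ _ E) subr_ge0 ge_max.
  have := carry_ge0 Cr dd y r (index v r); have : 0 <= dd v by rewrite ler0q.
  have := (Hy v).2; rewrite /L => h1 h2 h3; apply/andP; split; first lra.
  by rewrite lerBlDr lerDl mulr_ge0.
- move=> [|i] // /andP[_ ir] v E /=.
  have [Ei vr] := rv_index ur E.
  by rewrite fE ?(ltnW ir) // fE // /g vr Ei; ring.
- by move=> [|i] // /andP[_ ir] /=; rewrite fE //; exact: carry_le.
- move=> [|i] // /andP[_ ir] v E /=.
  have [Ei vr] := rv_index ur E.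
  rewrite /g vr Ei (Lstep _ _ E).
  have : L i + dd v - Cr * y v <= Num.max 0 (L i + dd v - Cr * y v) by rewrite le_max lexx orbT.
  lra.
Qed.

End Flows.

Section RouteDecomposition.
Variables (R : realType) (n : nat).
Notation V := (vertex n).
Implicit Types (x : {set V} -> R) (Rs : seq (route n)).

Definition integral_plan x :=
  [/\ forall e, is_edge e -> exists2 k : nat, (k <= 2)%N & x e = k%:R,
      forall v, x_delta_cust x v = 2 &
      forall S : {set 'I_n}, S != set0 -> x_E x S <= #|S|%:R - 1].

Lemma integral_plan_of_X_sub x : in_X_sub x -> integral_on_edges x -> integral_plan x.
Proof.
case=> Hb Hdeg Hs Hint; split => // e ie.
have [z Ez] := Hint e ie; have /andP[h0 h2] := Hb e ie.
rewrite Ez in h0 h2 *; case: z {Ez} h0 h2 => [k|k] h0 h2.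
  by exists k => //; rewrite -(ler_nat R).
by move: h0; rewrite NegzE mulrNz oppr_ge0 lern0.
Qed.

Lemma sum_eq_nat (Q : pred {set V}) (s : {set V}) :
  \sum_(e | Q e) ((e == s)%:R : R) = (Q s)%:R.
Proof.
rewrite -natr_sum big_mkcond (bigD1 s) //= eqxx big1 => [|e /negbTE ->]; last by case: (Q e).
by case: (Q s).
Qed.

Lemma sum_edge_update x x' (a b c : {set V}) (Q : pred {set V}) :
  (forall e, Q e -> x e = x' e + (e == a)%:R - (e == b)%:R - (e == c)%:R) ->
  \sum_(e | Q e) x e = \sum_(e | Q e) x' e + (Q a)%:R - (Q b)%:R - (Q c)%:R.
Proof. by move=> H; rewrite (eq_bigr _ H) !sumrB big_split /= !sum_eq_nat. Qed.

Lemma encodes_depot_routes x : integral_plan x ->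
  (forall e, is_edge e -> None \notin e -> x e = 0) -> exists Rs, encodes x Rs.
Proof.
case=> _ Hdeg _ H0; exists [seq [:: v] | v <- index_enum 'I_n].
have flat s : flatten [seq [:: v] | v <- s] = s by elim: s => //= a s ->.
split.
- by apply/allP => r /mapP [v _ ->].
- by rewrite flat index_enum_uniq.
- by move=> v; rewrite flat mem_index_enum.
move=> e ie; rewrite big_map.
have cntE v : route_edge_count [:: v] e = ((depot_edge v == e) * 2)%N.
  rewrite route_edge_countE /= addn0 [[set Some v; None]]setUC -/(depot_edge v).
  by case: (depot_edge v == e).
under eq_bigr do rewrite cntE.
have [Ne|nNe] := boolP (None \in e); last first.
  rewrite H0 // big1 // => v _; case: eqP => // E.
  by move: nNe; rewrite -E !inE eqxx.
have [u ->] := is_edge_depot ie Ne.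
rewrite -big_distrl /= natrM.
under eq_bigr do rewrite eq_depot_edge.
rewrite (bigD1 u) //= eqxx big1 => [|v /negbTE -> //].
rewrite addn0 mul1r -(Hdeg u) /x_delta_cust (bigD1 (depot_edge u)) /=; last first.
  by rewrite depot_edge_is_edge !inE eqxx orbT.
rewrite big1 ?addr0 // => e' /andP[/andP[ie' ue'] ne'].
apply: H0 => //; apply: contra ne' => Ne'.
have [u' E'] := is_edge_depot ie' Ne'.
by move: ue'; rewrite E' !inE /= => /eqP [->].
Qed.

Lemma route_reorient (a : 'I_n) s : exists b t,
  [/\ b :: t = rev (a :: s), last b t = a,
      perm_eq (b :: t) (a :: s), uniq (b :: t) = uniq (a :: s) &
      forall e : rel V, symmetric e ->
        count_adj e (route_path (b :: t)) = count_adj e (route_path (a :: s))].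
Proof.
exists (last a s), (rev (belast a s)).
have E : rev (a :: s) = last a s :: rev (belast a s) by rewrite lastI rev_rcons.
split; rewrite -?E ?perm_rev ?rev_uniq //.
- by have := f_equal (last a) E; rewrite /= rev_cons last_rcons.
- by move=> e eC; rewrite route_path_rev count_adj_rev.
Qed.

Lemma route_end_at x Rs u r : encodes x Rs -> r \in Rs -> u \in r -> 1 <= x (depot_edge u) ->
  exists a s, r = a :: s /\ (a == u) || (last a s == u).
Proof.
case=> allp uf _ Hx rin ur H1.
rewrite Hx ?depot_edge_is_edge // (ler_nat R 1) lt0n sum_nat_seq_neq0 in H1.
case/hasP: H1 => r' r'in /= Hr; move: Hr; rewrite route_edge_countE.
case: r' r'in (allP allp r' r'in) => [|a s] // r'in _; rewrite count_depot_edge => Hr.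
have ur' : u \in a :: s.
  case: (a =P u) Hr => [<- _|_]; first exact: mem_head.
  by case: (last a s =P u) => [<- _|_] //; apply: mem_last.
rewrite (flatten_uniq_mem_eq uf rin r'in ur ur'); exists a, s; split => //.
by move: Hr; case: (a == u); case: (last a s == u).
Qed.

Lemma route_orient_end (a u : 'I_n) s : (a == u) || (last a s == u) -> exists b t,
  [/\ last b t = u, perm_eq (b :: t) (a :: s), uniq (b :: t) = uniq (a :: s) &
      forall e : rel V, symmetric e ->
        count_adj e (route_path (b :: t)) = count_adj e (route_path (a :: s))].
Proof.
case/orP=> /eqP E; last by exists a, s; split.
by have [b [t [_ L P U C]]] := route_reorient a s; exists b, t; split; rewrite ?L.
Qed.

Lemma route_orient_start (a w : 'I_n) s : (a == w) || (last a s == w) -> exists t,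
  [/\ perm_eq (w :: t) (a :: s), uniq (w :: t) = uniq (a :: s) &
      forall e : rel V, symmetric e ->
        count_adj e (route_path (w :: t)) = count_adj e (route_path (a :: s))].
Proof.
case/orP=> /eqP E; first by exists s; rewrite -E; split.
have [b [t [Erev _ P U C]]] := route_reorient a s; exists t.
suff -> : w = b by split.
by move: Erev; rewrite [a :: s]lastI rev_rcons E => -[].
Qed.

Lemma x_E_route x Rs r : encodes x Rs -> r \in Rs -> #|[set v in r]|%:R - 1 <= x_E x [set v in r].
Proof.
move=> He rin; have [allp uf _ _] := He.
rewrite cardsE (card_uniqP (uniq_flatten_mem rin uf)).
apply: (x_E_block (u := [::]) (w := [::]) He rin); rewrite ?cats0 //.
by have := allP allp r rin; case: r {rin}.
Qed.

Lemma x_E_update x x' u w S : u != w ->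
  (forall e, is_edge e -> x e = x' e + (e == cust_edge u w)%:R -
     (e == depot_edge u)%:R - (e == depot_edge w)%:R) ->
  x_E x S = x_E x' S + ((u \in S) && (w \in S))%:R.
Proof.
move=> uw Hxx; rewrite /x_E (sum_edge_update (x' := x') (a := cust_edge u w)
  (b := depot_edge u) (c := depot_edge w)) => [|e /andP[ie _]]; last exact: Hxx.
by rewrite is_edge_cust_edge uw cust_edge_sub /depot_edge !depot_set2_subF !andbF !subr0.
Qed.

Lemma encodes_merge x x' Rs' u w : u != w -> encodes x' Rs' ->
  (forall e, is_edge e -> x e = x' e + (e == cust_edge u w)%:R -
     (e == depot_edge u)%:R - (e == depot_edge w)%:R) ->
  1 <= x' (depot_edge u) -> 1 <= x' (depot_edge w) ->
  (forall S : {set 'I_n}, S != set0 -> x_E x S <= #|S|%:R - 1) ->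
  exists Rs, encodes x Rs.
Proof.
move=> uw He Hxx Hu Hw Hsub; have [allp uf cov Hx] := He.
have [r1 r1in ur1] : exists2 r1, r1 \in Rs' & u \in r1 by apply/flattenP.
have [r2 r2in wr2] : exists2 r2, r2 \in Rs' & w \in r2 by apply/flattenP.
have r12 : r1 != r2.
  apply/eqP => E; rewrite -E in wr2.
  have S0 : [set v in r1] != set0 by apply/set0Pn; exists u; rewrite inE.
  have := Hsub _ S0; have := x_E_route He r1in.
  by rewrite (x_E_update _ uw Hxx) !inE ur1 wr2 /=; lra.
have [a1 [s1 [E1 H1]]] := route_end_at He r1in ur1 Hu.
have [a2 [s2 [E2 H2]]] := route_end_at He r2in wr2 Hw.
have [b1 [t1 [L1 P1 U1 C1]]] := route_orient_end H1.
have [t2 [P2 U2 C2]] := route_orient_start H2.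
set M := (b1 :: t1) ++ (w :: t2).
set rest := [seq r <- Rs' | (r != r1) && (r != r2)].
have Pm : perm_eq Rs' [:: r1, r2 & rest].
  apply: uniq_perm; first exact: uniq_flatten_nonempty.
    by rewrite /= inE negb_or r12 !mem_filter !eqxx /= andbF filter_uniq ?uniq_flatten_nonempty.
  move=> r; rewrite !inE mem_filter.
  case: (eqVneq r r1) => [->|_]; first by rewrite r1in.
  by case: (eqVneq r r2) => [->|_] //=; rewrite r2in.
have Pf : perm_eq (flatten (M :: rest)) (flatten Rs').
  apply: (@perm_trans _ (flatten [:: r1, r2 & rest])); last by apply: perm_flatten; rewrite perm_sym.
  change (perm_eq (M ++ flatten rest) (r1 ++ r2 ++ flatten rest)).
  by rewrite /M -catA {1}E1 {1}E2 perm_cat // perm_cat.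
exists (M :: rest); split.
- apply/allP => r; rewrite inE => /orP[/eqP -> // | ].
  by rewrite mem_filter => /andP[_ rin]; apply: (allP allp).
- by rewrite (perm_uniq Pf).
- by move=> v; rewrite (perm_mem Pf).
move=> e ie; rewrite Hxx // Hx // (perm_big _ Pm) /= !big_cons.
have sym : symmetric (fun a b : V => [set a; b] == e) by move=> a b; rewrite setUC.
have := count_adj_route_cat (fun a b => [set a; b] == e) b1 t1 w t2.
rewrite (C1 _ sym) (C2 _ sym) L1 -E1 -E2 -!route_edge_countE => /(congr1 (fun k => k%:R : R)).
rewrite !natrD [[set Some u; None]]setUC -/(depot_edge u) -/(depot_edge w) -/(cust_edge u w).
rewrite ![(_ == e)]eq_sym; lra.
Qed.

Definition cust_support x :=
  [set e : {set V} | is_edge e && (None \notin e) && (x e != 0)].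

Definition cut_edge x u w (e : {set V}) : R :=
  if e == cust_edge u w then 0
  else if (e == depot_edge u) || (e == depot_edge w) then x e + 1 else x e.

Lemma integral_plan_ge0 x e : integral_plan x -> is_edge e -> 0 <= x e.
Proof. by case=> Hk _ _ ie; have [k _ ->] := Hk e ie. Qed.

Lemma integral_plan_cust_edge x u w : integral_plan x -> u != w ->
  x (cust_edge u w) != 0 -> x (cust_edge u w) = 1.
Proof.
move=> Hx uw x0; have [Hk _ Hsub] := Hx.
have [k k2 Ek] := Hk _ (eqbRL (is_edge_cust_edge u w) uw).
rewrite Ek in x0 *; case: k k2 Ek x0 => [|[|[|k]]] // _ Ek; rewrite ?eqxx // => _; exfalso.
have S0 : [set u; w] != set0 by apply/set0Pn; exists u; rewrite !inE eqxx.
have := Hsub _ S0; rewrite cards2 uw /x_E (bigD1 (cust_edge u w)) /=; last first.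
  by rewrite is_edge_cust_edge uw cust_edge_sub !inE !eqxx orbT.
set rest := \sum_(i | _) _.
have : 0 <= rest by apply: sumr_ge0 => e /andP[/andP[ie _] _]; apply: integral_plan_ge0.
rewrite Ek; lra.
Qed.

Lemma integral_plan_depot_edge x u w v : integral_plan x -> u != w ->
  x (cust_edge u w) = 1 -> (v == u) || (v == w) -> x (depot_edge v) <= 1.
Proof.
move=> Hx uw x1 vuw; have [_ Hdeg _] := Hx.
have := Hdeg v; rewrite /x_delta_cust (bigD1 (cust_edge u w)) /=; last first.
  by rewrite is_edge_cust_edge uw !inE !(inj_eq (@Some_inj _)).
rewrite (bigD1 (depot_edge v)) /=; last first.
  by rewrite depot_edge_is_edge !inE eqxx orbT eq_sym cust_edge_neq_depot_edge.
set rest := \sum_(i | _) _.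
have : 0 <= rest by apply: sumr_ge0 => e /andP[/andP[/andP[ie _] _] _]; apply: integral_plan_ge0.
rewrite x1; lra.
Qed.

Lemma cut_edgeE x u w e : u != w -> x (cust_edge u w) = 1 ->
  x e = cut_edge x u w e + (e == cust_edge u w)%:R -
        (e == depot_edge u)%:R - (e == depot_edge w)%:R.
Proof.
move=> uw x1; rewrite /cut_edge.
have [->|_] := eqVneq e (cust_edge u w).
  by rewrite x1 !cust_edge_neq_depot_edge /=; ring.
have [->|nu] := eqVneq e (depot_edge u); first by rewrite eq_depot_edge (negbTE uw) /=; ring.
by case: (eqVneq e (depot_edge w)) => [->|_] /=; ring.
Qed.

Lemma integral_plan_cut_edge x u w : integral_plan x -> u != w ->
  x (cust_edge u w) != 0 -> integral_plan (cut_edge x u w).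
Proof.
move=> Hx uw x0; have x1 := integral_plan_cust_edge Hx uw x0.
have [Hk Hdeg Hsub] := Hx; have Hxx e := cut_edgeE e uw x1.
split.
- move=> e ie; rewrite /cut_edge; case: ifP => _; first by exists 0%N.
  case: ifP => Hd; last exact: Hk.
  have [k k2 Ek] := Hk e ie; exists k.+1; last by rewrite Ek -natr1.
  rewrite ltnS -(ler_nat R) -Ek; case/orP: Hd => /eqP ->.
  + by apply: (integral_plan_depot_edge Hx uw x1); rewrite eqxx.
  + by apply: (integral_plan_depot_edge Hx uw x1); rewrite eqxx orbT.
- move=> v; have := Hdeg v; rewrite /x_delta_cust.
  rewrite (sum_edge_update (x' := cut_edge x u w) (a := cust_edge u w)
    (b := depot_edge u) (c := depot_edge w)) => [|e _]; last exact: Hxx.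
  rewrite !depot_edge_is_edge is_edge_cust_edge uw /= !inE /= !(inj_eq (@Some_inj _)).
  case: (eqVneq v u) => [->|vu]; first by rewrite (negbTE uw) /=; lra.
  by case: (eqVneq v w) => [->|vw] /=; lra.
- move=> S S0; have := Hsub S S0; rewrite (x_E_update _ uw (fun e _ => Hxx e)).
  by case: (_ && _) => /=; lra.
Qed.

Lemma card_cust_support_cut_edge x u w : integral_plan x -> u != w ->
  x (cust_edge u w) != 0 -> (#|cust_support (cut_edge x u w)| < #|cust_support x|)%N.
Proof.
move=> Hx uw x0.
have sub : cust_support (cut_edge x u w) \subset cust_support x :\ cust_edge u w.
  apply/subsetP => e; rewrite !inE => /andP[/andP[ie nNe] xe].
  have ne : e != cust_edge u w by apply: contraNneq xe => ->; rewrite /cut_edge eqxx.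
  rewrite ne ie nNe /=; move: xe; rewrite /cut_edge (negbTE ne).
  suff -> : (e == depot_edge u) || (e == depot_edge w) = false by [].
  by apply/negbTE; apply: contraNN nNe => /orP[] /eqP ->; rewrite !inE eqxx.
apply: leq_ltn_trans (subset_leq_card sub) _.
rewrite (cardsD1 (cust_edge u w) (cust_support x)) inE x0 andbT.
by rewrite is_edge_cust_edge uw !inE.
Qed.

Lemma encodes_exists x : integral_plan x -> exists Rs, encodes x Rs.
Proof.
have [m le_m] := ubnP #|cust_support x|; elim: m x le_m => // m IH x le_m Hx.
case: (pickP (mem (cust_support x))) => [e0 | empty]; last first.
  apply: encodes_depot_routes => // e ie nNe; apply/eqP.
  by have := empty e; rewrite /= inE ie nNe /= => /negbFE.
rewrite /= inE => /andP[/andP[ie0 nN0] x0].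
have [u [w [uw E0]]] := is_edge_cust ie0 nN0; rewrite E0 in x0.
have x1 := integral_plan_cust_edge Hx uw x0.
have [Rs' He'] := IH (cut_edge x u w)
  (leq_trans (card_cust_support_cut_edge Hx uw x0) le_m) (integral_plan_cut_edge Hx uw x0).
have [_ _ Hsub] := Hx.
apply: (encodes_merge uw He' (fun e _ => cut_edgeE e uw x1)) _ _ Hsub.
- rewrite /cut_edge [depot_edge u == _]eq_sym cust_edge_neq_depot_edge eqxx /= lerDr.
  exact: integral_plan_ge0 Hx (depot_edge_is_edge u).
- rewrite /cut_edge [depot_edge w == _]eq_sym cust_edge_neq_depot_edge eqxx orbT /= lerDr.
  exact: integral_plan_ge0 Hx (depot_edge_is_edge w).
Qed.

End RouteDecomposition.

Section ThresholdRounding.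
Variable R : realType.
Implicit Types (a b t : R).

Lemma floor_subr_ge a b (K : int) : K%:~R <= a - b -> K <= Num.floor a - Num.floor b.
Proof. by move=> H; rewrite lerBrDr floor_ge_int intrD; have := floor_le b; lra. Qed.

Lemma floor_subr_le a b (K : int) : a - b <= K%:~R -> Num.floor a - Num.floor b <= K.
Proof.
move=> H; rewrite lerBlDr -ltzD1 floor_lt_int !intrD.
by have := floorD1_gt b; rewrite intrD; lra.
Qed.

Definition ceil_gap a : R := (Num.ceil a)%:~R - a.

Lemma ceil_gap_itv a : 0 <= ceil_gap a < 1.
Proof. by rewrite /ceil_gap; have := ceil_itv a; rewrite intrB => /andP[? ?]; apply/andP; lra. Qed.

Lemma floorD_itv a t : 0 <= t < 1 ->
  (Num.floor (a + t))%:~R = (Num.ceil a)%:~R - ((t < ceil_gap a)%R)%:R :> R.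
Proof.
move=> /andP[t0 t1]; have := ceil_itv a; rewrite intrB => /andP[h1 h2].
rewrite /ceil_gap; case: ltP => tl /=.
  rewrite (@floor_def _ _ (Num.ceil a - 1)); first by rewrite intrB.
  by rewrite subrK intrB; apply/andP; lra.
rewrite (@floor_def _ _ (Num.ceil a)); first by rewrite subr0.
by rewrite intrD; apply/andP; lra.
Qed.

Section Breakpoints.
Variable B : seq R.
Hypotheses (B_sorted : sorted <%R B) (B_itv : forall t, t \in B -> 0 <= t < 1) (B0 : 0 \in B).

Definition brk (j : nat) : R := nth 1 B j.
Definition brk_weight (j : nat) : R := brk j.+1 - brk j.

Lemma brk_lt j k : (j < k)%N -> (k <= size B)%N -> brk j < brk k.
Proof.
move=> jk kB; rewrite /brk.
case: (ltngtP k (size B)) jk kB => // [kB jk _|-> jk _].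
  by apply: (sorted_ltn_nth lt_trans) => //; rewrite inE //; exact: ltn_trans jk kB.
by rewrite [nth 1 B (size B)]nth_default //; have /andP[] := B_itv (mem_nth 1 jk).
Qed.

Lemma brk_le j k : (j <= k)%N -> (k <= size B)%N -> brk j <= brk k.
Proof. by move=> jk kB; case: (ltngtP j k) jk => // [jk _|-> _]; [exact/ltW/brk_lt|]. Qed.

Lemma brk0 : brk 0 = 0.
Proof.
have iB : (index 0%R B < size B)%N by rewrite index_mem.
have E : brk (index 0 B) = 0 by rewrite /brk nth_index.
case: (posnP (index 0%R B)) => [i0|ip]; first by rewrite -E i0.
have := brk_lt ip (ltnW iB); rewrite E.
by have /andP[h _] := B_itv (mem_nth 1 (ltn_trans ip iB)); rewrite /brk in h *; lra.
Qed.

Lemma brk_weight_ge0 j : (j < size B)%N -> 0 <= brk_weight j.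
Proof. by move=> jB; rewrite /brk_weight subr_ge0; apply: brk_le. Qed.

Lemma sum_brk_weight : \sum_(j < size B) brk_weight j = 1.
Proof.
rewrite -(big_mkord xpredT brk_weight) /brk_weight telescope_sumr // brk0.
by rewrite /brk nth_default // subr0.
Qed.

(* Only the thresholds [brk j] below [ceil_gap a] round [a] down. *)
Lemma brk_floor_average a : ceil_gap a \in B ->
  \sum_(j < size B) brk_weight j * (Num.floor (a + brk j))%:~R = a.
Proof.
move=> ta; set k := index (ceil_gap a) B.
have kB : (k < size B)%N by rewrite index_mem.
have tk : brk k = ceil_gap a by rewrite /brk nth_index.
rewrite -(big_mkord xpredT (fun j => brk_weight j * (Num.floor (a + brk j))%:~R)).
rewrite (eq_big_nat _ _ (F2 := fun j => (Num.ceil a)%:~R * brk_weight j -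
    brk_weight j * (j < k)%N%:R)); last first.
  move=> j /andP[_ jB]; rewrite floorD_itv; last by apply: B_itv; apply: mem_nth.
  have -> : (brk j < ceil_gap a) = (j < k)%N.
    rewrite -tk; case: (ltnP j k) => jk; first exact: brk_lt (ltnW kB).
    by apply/negbTE; rewrite -leNgt; apply: brk_le => //; exact: ltnW.
  ring.
rewrite sumrB -mulr_sumr.
have -> : \sum_(0 <= i < size B) brk_weight i = 1 by rewrite big_mkord sum_brk_weight.
rewrite (big_cat_nat _ (n := k)) //=; last exact: ltnW.
rewrite (eq_big_nat _ _ (F2 := brk_weight)); last by move=> j /andP[_ ->]; rewrite mulr1.
rewrite [\sum_(k <= i < size B) _]big1_seq; last first.
  by move=> j /andP[_]; rewrite mem_index_iota => /andP[kj _]; rewrite ltnNge kj mulr0.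
by rewrite /brk_weight telescope_sumr // brk0 tk /ceil_gap; ring.
Qed.

End Breakpoints.

Lemma floor_average (A : seq R) : exists m (lam t : 'I_m -> R),
  [/\ forall j, 0 <= lam j, \sum_j lam j = 1 &
      forall a, a \in A -> \sum_j lam j * (Num.floor (a + t j))%:~R = a].
Proof.
pose B := sort <=%R (undup (0 :: map ceil_gap A)).
have B_sorted : sorted <%R B by rewrite sort_lt_sorted undup_uniq.
have B_itv t : t \in B -> 0 <= t < 1.
  rewrite mem_sort mem_undup inE => /orP[/eqP->|/mapP[a _ ->]]; last exact: ceil_gap_itv.
  by rewrite lexx ltr01.
have B0 : 0 \in B by rewrite mem_sort mem_undup inE eqxx.
exists (size B), (fun j => brk_weight B j), (fun j => brk B j); split.
- by move=> j; apply: brk_weight_ge0.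
- exact: sum_brk_weight.
- move=> a aA; apply: brk_floor_average => //.
  by rewrite mem_sort mem_undup inE map_f ?orbT.
Qed.

End ThresholdRounding.

Section RoundingAlongSequence.
Variables (R : realType) (n : nat).
Implicit Types (y : 'I_n -> R) (L U s W : seq 'I_n) (t : R).

Definition prefix_sum y L i : R := \sum_(v <- take i L) y v.

Definition round_along y L t v : R :=
  (Num.floor (prefix_sum y L (index v L).+1 + t) -
   Num.floor (prefix_sum y L (index v L) + t))%:~R.

Lemma sum_index_uniq (T : eqType) (s : seq T) (F : nat -> R) : uniq s ->
  \sum_(v <- s) F (index v s) = \sum_(0 <= k < size s) F k.
Proof.
elim: s F => [|a s IH] F; first by rewrite big_nil big_geq.
move=> /andP[as_ us]; rewrite big_cons /= eqxx big_nat_recl //; congr (_ + _).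
rewrite -(IH (fun k => F k.+1)) // big_seq [RHS]big_seq; apply: eq_bigr => v vs.
by case: eqP => // E; rewrite E vs in as_.
Qed.

Lemma sum_prefix_sum y L U s W : L = U ++ s ++ W ->
  \sum_(v <- s) y v = prefix_sum y L (size U + size s) - prefix_sum y L (size U).
Proof.
move=> E; have T1 : take (size U + size s) L = U ++ s by rewrite E catA take_size_cat ?size_cat.
have T2 : take (size U) L = U by rewrite E take_size_cat.
by rewrite /prefix_sum T1 T2 big_cat /= addrC addrK.
Qed.

Lemma sum_round_along y L t U s W : uniq L -> L = U ++ s ++ W ->
  \sum_(v <- s) round_along y L t v =
  (Num.floor (prefix_sum y L (size U + size s) + t) -
   Num.floor (prefix_sum y L (size U) + t))%:~R.
Proof.
move=> uL E; pose P k := (Num.floor (prefix_sum y L (size U + k) + t))%:~R : R.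
have us : uniq s by apply: infix_uniq uL; rewrite E infix_infix.
have idx v : v \in s -> index v L = (size U + index v s)%N.
  move=> vs; rewrite E index_cat; case: ifPn => [vU|_]; last by rewrite index_cat vs.
  by move: uL; rewrite E cat_uniq => /and3P[_ /hasP[]]; exists v; rewrite // mem_cat vs.
rewrite big_seq (eq_bigr (fun v => P (index v s).+1 - P (index v s))); last first.
  by move=> v vs; rewrite /round_along /P idx // intrB addnS.
by rewrite -big_seq (sum_index_uniq (fun k => P k.+1 - P k)) // telescope_sumr // /P addn0 intrB.
Qed.

Lemma round_along_ge y L t U s W (K : int) : uniq L -> L = U ++ s ++ W ->
  K%:~R <= \sum_(v <- s) y v -> K%:~R <= \sum_(v <- s) round_along y L t v.
Proof.
move=> uL E; rewrite (sum_round_along _ _ uL E) (sum_prefix_sum _ E) ler_int => H.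
by apply: floor_subr_ge; rewrite opprD addrACA subrr addr0.
Qed.

Lemma round_along_le y L t U s W (K : int) : uniq L -> L = U ++ s ++ W ->
  \sum_(v <- s) y v <= K%:~R -> \sum_(v <- s) round_along y L t v <= K%:~R.
Proof.
move=> uL E; rewrite (sum_round_along _ _ uL E) (sum_prefix_sum _ E) ler_int => H.
by apply: floor_subr_le; rewrite opprD addrACA subrr addr0.
Qed.

Lemma split_at_index L v : v \in L ->
  L = take (index v L) L ++ [:: v] ++ drop (index v L).+1 L.
Proof.
move=> vL; rewrite /= -{1}(cat_take_drop (index v L) L) (drop_nth v) ?index_mem //.
by rewrite nth_index.
Qed.

End RoundingAlongSequence.

Section SubtourRoundedInequalities.
Variables (R : realType) (n N : nat) (C : rat) (d : 'I_N -> 'I_n -> rat).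
Hypotheses (C_gt0 : 0 < C) (d_ge0 : forall xi v, 0 <= d xi v).
Implicit Types (x : {set vertex n} -> R) (Rs : seq (route n)) (S : {set 'I_n}).

Local Notation dR xi := (fun v => (ratr (d xi v) : R)).

Definition sri_valid x (y : 'I_N -> 'I_n -> R) : Prop :=
  forall S xi, S != set0 -> kS R C d xi S + x_E x S - #|S|%:R <= \sum_(v in S) y xi v.

Lemma sum_demand_le_kS xi S : \sum_(v in S) dR xi v <= ratr C * kS R C d xi S.
Proof.
rewrite /kS /ceilR -rmorph_sum -ratr_int -rmorphM /= ler_rat.
by rewrite mulrC -ler_pdivrMr //; exact: ceil_ge.
Qed.

Lemma kS_le_int xi S (m : int) :
  \sum_(v in S) dR xi v <= ratr C * m%:~R -> kS R C d xi S <= m%:~R.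
Proof.
move=> H; rewrite /kS /ceilR ler_int ceil_le_int ler_pdivrMr // mulrC.
by rewrite -(ler_rat R) rmorphM /= ratr_int rmorph_sum.
Qed.

Lemma sri_of_block_feasible x Rs xi (z : 'I_n -> R) : encodes x Rs ->
  (forall r, r \in Rs -> block_feasible (ratr C) z (dR xi) r) ->
  (forall v, is_intR (z v)) ->
  forall S, kS R C d xi S + x_E x S - #|S|%:R <= \sum_(v in S) z v.
Proof.
move=> He Hblk zint S; have [_ uf cov _] := He.
have H : \sum_(r <- Rs) \sum_(v <- r | v \in S) dR xi v <=
    \sum_(r <- Rs) ratr C * (\sum_(v <- r | v \in S) z v + (count (mem S) r)%:R -
                              (inner_adj S r)%:R).
  by rewrite big_seq [X in _ <= X]big_seq; apply: ler_sum => r rin; apply: block_feasible_sum_in; apply: Hblk.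
rewrite -(sum_partition _ _ uf cov) -mulr_sumr sumrB big_split -(sum_partition _ _ uf cov) in H.
rewrite -(card_partition R S uf cov) -natr_sum -(x_E_encodes _ He) in H.
have /intrP[M EM] : \sum_(v in S) z v + #|S|%:R - x_E x S \is a Num.int.
  rewrite (x_E_encodes _ He) rpredB ?rpredD ?natr_int //.
  by apply: rpred_sum => v _; apply/intrP; apply: zint.
by rewrite EM in H; have := kS_le_int H; rewrite -EM; lra.
Qed.

Lemma block_lower_of_sri x Rs r u t w xi (z : 'I_n -> R) :
  encodes x Rs -> r \in Rs -> r = u ++ t ++ w -> t != [::] ->
  kS R C d xi [set v in t] + x_E x [set v in t] - #|[set v in t]|%:R <=
    \sum_(v in [set v in t]) z v ->
  kS R C d xi [set v in t] - 1 <= \sum_(v <- t) z v.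
Proof.
move=> He rin E tn; have [_ uf _ _] := He.
have ut : uniq t by apply: infix_uniq (uniq_flatten_mem rin uf); rewrite E infix_infix.
have -> : \sum_(v in [set v in t]) z v = \sum_(v <- t) z v.
  by rewrite big_uniq //; apply: eq_bigl => v; rewrite inE.
rewrite cardsE (card_uniqP ut).
by have := x_E_block He rin E tn; lra.
Qed.

Lemma block_feasible_of_lower xi (z : 'I_n -> R) t : uniq t ->
  kS R C d xi [set v in t] - 1 <= \sum_(v <- t) z v ->
  \sum_(v <- t) dR xi v <= ratr C * (1 + \sum_(v <- t) z v).
Proof.
move=> ut H; have C0 : 0 <= (ratr C : R) by rewrite ler0q ltW.
have <- : \sum_(v in [set v in t]) dR xi v = \sum_(v <- t) dR xi v.
  by rewrite big_uniq //; apply: eq_bigl => v; rewrite inE.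
by apply: le_trans (sum_demand_le_kS _ _) _; apply: ler_wpM2l => //; lra.
Qed.

Lemma block_feasible_of_sri x Rs r xi (z : 'I_n -> R) : encodes x Rs -> r \in Rs ->
  (forall S, S != set0 -> kS R C d xi S + x_E x S - #|S|%:R <= \sum_(v in S) z v) ->
  block_feasible (ratr C) z (dR xi) r.
Proof.
move=> He rin Hz u t w E tn; have [_ uf _ _] := He.
have ut : uniq t by apply: infix_uniq (uniq_flatten_mem rin uf); rewrite E infix_infix.
apply: (block_feasible_of_lower ut (block_lower_of_sri He rin E tn (Hz _ _))).
by case: t tn {E ut} => // a t _; apply/set0Pn; exists a; rewrite inE mem_head.
Qed.

Lemma in_Pi_iff x Rs0 (z : 'I_N -> 'I_n -> R) : encodes x Rs0 ->
  in_Pi C d x z <-> (forall xi v, is_intR (z xi v) /\ 0 <= z xi v) /\ sri_valid x z.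
Proof.
move=> He0; have [_ _ cov _] := He0; split => [Hz | [zint zsri] Rs He r rin xi].
  have zint : forall xi v, is_intR (z xi v) /\ 0 <= z xi v.
    move=> xi v; have /flattenP[r rin vr] := cov v.
    by have [/(_ v)] := Hz Rs0 He0 r rin xi.
  split=> // S xi _; apply: (sri_of_block_feasible He0) => [r rin|v]; last exact: (zint xi v).1.
  exact: block_feasible_of_in_Y (Hz Rs0 He0 r rin xi).
have [_ uf _ _] := He.
apply: in_Y_of_block_feasible (zint xi) (uniq_flatten_mem rin uf) _.
- exact: ltW.
- by move=> v; apply: d_ge0.
- by apply: (block_feasible_of_sri He rin) => S S0; apply: zsri.
Qed.

Lemma round_along_in_SRI x Rs0 (b : 'I_n -> nat) (y : 'I_N -> 'I_n -> R) t :
  encodes x Rs0 -> in_SRI C d b x y ->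
  (forall xi v, is_intR (round_along (y xi) (flatten Rs0) t v)) /\
  in_SRI C d b x (fun xi => round_along (y xi) (flatten Rs0) t).
Proof.
move=> He0 [ybox ysri]; have [_ uf cov _] := He0; set L := flatten Rs0.
have zint xi v : is_intR (round_along (y xi) L t v) by rewrite /round_along; eexists.
split=> //; split.
  move=> xi v; have E := split_at_index (cov v).
  have /andP[y0 yb] := ybox xi v.
  have := round_along_ge (y := y xi) (K := 0) t uf E.
  have := round_along_le (y := y xi) (K := b v) t uf E.
  by rewrite !big_seq1 => h1 h2; apply/andP; split; [exact: h2 | exact: h1].
move=> S xi _; apply: (sri_of_block_feasible He0) => [r rin u s w E sn|v]; last exact: zint.
have [U [W EL]] := flatten_infix rin E.
have us : uniq s by apply: infix_uniq uf; rewrite EL infix_infix.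
apply: (block_feasible_of_lower us).
have S0 : [set v in s] != set0.
  by case: s sn {E EL us} => // a s _; apply/set0Pn; exists a; rewrite inE mem_head.
have := block_lower_of_sri He0 rin E sn (ysri _ xi S0).
rewrite /kS /ceilR; set c := Num.ceil _ => H.
have -> : c%:~R - 1 = (c - 1)%:~R :> R by rewrite intrB.
by apply: (round_along_ge t uf EL); rewrite intrB.
Qed.

Lemma sri_integral_hull x Rs0 (b : 'I_n -> nat) (y : 'I_N -> 'I_n -> R) :
  encodes x Rs0 -> in_SRI C d b x y ->
  conv (fun z => (forall xi v, is_intR (z xi v)) /\ in_SRI C d b x z) y.
Proof.
move=> He0 Hy; have [_ uf cov _] := He0; set L := flatten Rs0.
have [m [lam [t [lam0 lam1 avg]]]] :=
  floor_average [seq prefix_sum (y xi) L i | xi <- enum 'I_N, i <- iota 0 (size L).+1].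
exists m, lam, (fun j xi => round_along (y xi) L (t j)); split => //.
  by move=> j; split; [exact: lam0 | exact: round_along_in_SRI].
move=> xi v; have E := split_at_index (cov v).
have avgP i : (i <= size L)%N ->
    \sum_j lam j * (Num.floor (prefix_sum (y xi) L i + t j))%:~R = prefix_sum (y xi) L i.
  by move=> iL; apply: avg; apply: allpairs_f; rewrite ?mem_enum // mem_iota add0n ltnS.
have vL : (index v L < size L)%N by rewrite index_mem cov.
have := sum_prefix_sum (y xi) E; rewrite big_seq1 size_take vL /= addn1 => ->.
under eq_bigr do rewrite /round_along intrB mulrBr.
by rewrite sumrB !avgP // ltnW.
Qed.

Lemma in_SRI_conv x (b : 'I_n -> nat) (P : ('I_N -> 'I_n -> R) -> Prop) y :
  (forall z, P z -> in_SRI C d b x z) -> conv P y -> in_SRI C d b x y.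
Proof.
move=> PS [m [lam [pts [Hj Hsum Hy]]]]; split.
  move=> xi v; rewrite Hy; apply/andP; split.
    by apply: sumr_ge0 => j _; have [l0 /PS[/(_ xi v) /andP[h _] _]] := Hj j; apply: mulr_ge0.
  have -> : (b v)%:R = \sum_j lam j * (b v)%:R by rewrite -mulr_suml Hsum mul1r.
  apply: ler_sum => j _.
  by have [l0 /PS[/(_ xi v) /andP[_ h] _]] := Hj j; apply: ler_wpM2l.
move=> S xi S0; under eq_bigr do rewrite Hy.
rewrite exchange_big /=.
set Q := (X in X <= _); have -> : Q = \sum_j lam j * Q by rewrite -mulr_suml Hsum mul1r.
apply: ler_sum => j _.
rewrite -mulr_sumr; have [l0 /PS[_ Pj]] := Hj j; apply: ler_wpM2l => //; exact: Pj.
Qed.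

End SubtourRoundedInequalities.

Lemma conv_sub (R : realType) n N (P Q : ('I_N -> 'I_n -> R) -> Prop) y :
  (forall z, P z -> Q z) -> conv P y -> conv Q y.
Proof.
move=> PQ [m [lam [pts [Hj Hsum Hy]]]]; exists m, lam, pts; split => // j.
by have [l0 /PQ] := Hj j.
Qed.

Unset Implicit Arguments. Set Strict Implicit. Set Printing Implicit Defensive.

Theorem theorem3 (R : realType) (n N : nat)
  (C : rat) (d : 'I_N -> 'I_n -> rat) (p : 'I_N -> rat) (ch : Xchoice)
  (HC : 0 < C)
  (Hd : forall xi v, 0 <= d xi v <= C)
  (Hp : forall xi, 0 <= p xi)
  (Hp1 : \sum_(xi < N) p xi = 1)
  (Hk : match ch with Xcvrp k => (0 < k)%N | Xsub => True end)
  (b : 'I_n -> nat)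
  (xbar : {set vertex n} -> R)
  (HX : in_X C d p ch xbar)
  (Hint : integral_on_edges xbar) :
  forall y : 'I_N -> 'I_n -> R,
    in_SRI C d b xbar y <-> conv (fun z => in_Pi C d xbar z /\ in_box b z) y.
Proof.
have Hsub : in_X_sub xbar by case: ch HX {Hk} => [|k] HX; [exact: HX | case: HX].
have [Rs0 He0] := encodes_exists (integral_plan_of_X_sub Hsub Hint).
have d0 xi v : 0 <= d xi v by case/andP: (Hd xi v).
move=> y; split => [Hy | Hconv].
- apply: (conv_sub _ (sri_integral_hull HC He0 Hy)) => z [zint [zbox zsri]].
  split=> //; apply/(in_Pi_iff HC d0 _ He0); split=> // xi v.
  by split; [exact: zint | case/andP: (zbox xi v)].
- by apply: (in_SRI_conv _ Hconv) => z [/(in_Pi_iff HC d0 _ He0) [_ zsri] zbox].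
Qed.
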